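(* Let $\{a_n\}_{n\ge1}$ be a sequence of nonzero complex numbers and let $w_n(z)$ ($n\ge0$) be the $n$-th approximant of the continued fraction $$\cfrac{a_1}{z-\cfrac{a_2}{1-\cfrac{a_3}{z-\cfrac{a_4}{1-\cdots}}}}$$ (partial denominators alternately $z$ and $1$; $w_0=0$). Then: (1) $w_n(z)$ is a rational function of degree $\lfloor\frac{n+1}{2}\rfloor$; for $n\ge1$, $w_n(z)\sim\frac{a_1}{z}$ and $w_n(z)-w_{n-1}(z)\sim\frac{a_1a_2\cdots a_n}{z^n}$ $(z\to\infty)$; in particular $\{w_n(z)-w_{n-1}(z)\}_{n\ge1}$ is an asymptotic sequence at $\infty$. Moreover $w_{2n}(z)$ coincides with the $n$-th approximant of the continued fraction $$\cfrac{a_1}{z-a_2-\cfrac{a_2a_3}{z-a_3-a_4-\cfrac{a_4a_5}{z-a_5-a_6-\cdots}}}.$$ (2) Let $f(z)$ be a complex-valued function defined on an unbounded subset $\mathfrak X$ of $\mathbb C\cup\{\infty\}$. The following are equivalent: (a) $f(z)\sim \cfrac{a_1}{z-\cfrac{a_2}{1-\cfrac{a_3}{z-\cfrac{a_4}{1-\cdots}}}}$ $(z\to\infty)_{\mathfrak X}$; (b) $f(z)\sim \cfrac{a_1}{z-a_2-\cfrac{a_2a_3}{z-a_3-a_4-\cfrac{a_4a_5}{z-a_5-a_6-\cdots}}}$ $(z\to\infty)_{\mathfrak X}$; (c) $f(z)-w_n(z)\sim\frac{a_1a_2\cdots a_{n+1}}{z^{n+1}}$ $(z\to\infty)_{\mathfrak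 X}$ for all $n\ge0$; (d) $f(z)-w_n(z)=O(z^{-(n+1)})$ $(z\to\infty)_{\mathfrak X}$ for all $n\ge0$; (e) $f(z)-w_n(z)=O(z^{-(n+1)})$ $(z\to\infty)_{\mathfrak X}$ for infinitely many $n\ge0$; (f) for every $n\ge0$, $w_{2n}(z)$ is the unique rational function $w(z)\in\mathbb C(z)$ of degree at most $n$ with $f(z)-w(z)=O(z^{-(2n+1)})$ $(z\to\infty)_{\mathfrak X}$; (g) for every $n\ge1$, $w_{2n}(z)$ is the unique Padé approximant of $f(z)$ over $\mathfrak X$ at $z=\infty$ of order $[n-1,n]$. (3) If the equivalent conditions in (2) hold, then the best rational approximations of $f(z)$ over $\mathfrak X$ are precisely the even-indexed approximants $w_{2n}(z)$, $n\ge0$.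
   Context: Asymptotic relations are as $z\to\infty$ within $\mathfrak X$: $f=O(g)$ if $|f|\le M|g|$ on a punctured neighbourhood of $\infty$ (intersected with $\mathfrak X$) for some $M>0$; $f=o(g)$ if for every $M>0$; $f\sim g$ if $f-g=o(g)$ and $g-f=o(f)$. Asymptotic sequence: $\varphi_{n+1}=o(\varphi_n)$ for all $n$. For a continued fraction $K$ with approximants $v_m$ ($v_0=0$), $f\sim K$ means $\{v_m-v_{m-1}\}_{m\ge1}$ is an asymptotic sequence and $f-v_m=O(v_{m+1}-v_m)$ for all $m\ge0$. Degree of a rational function: max of degrees of numerator and denominator in lowest terms. A best rational approximation of $f$ over $\mathfrak X$ is a $w\in\mathbb C(z)$ that is the unique $v\in\mathbb C(z)$ of degree $\le\deg w$ with $f-v=O(f-w)$ $(z\to\infty)_{\mathfrak X}$. The Padé approximant of $f$ over $\mathfrak X$ at $\infty$ of order $[n-1,n]$ is the unique $g/h$ with $\deg g\le n-1$, $h\ne0$, $\deg h\le n$, and $f-g/h=O(z^{-(2n+1)})$ $(z\to\infty)_{\mathfrak X}$. *)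

From HB Require Import structures.
From mathcomp Require Import all_boot all_order all_algebra.
From mathcomp Require Import reals complex.
Set Implicit Arguments. Unset Strict Implicit. Unset Printing Implicit Defensive.
Import Order.TTheory GRing.Theory Num.Theory.
Local Open Scope ring_scope.
Notation "x %:F" := (@FracField.tofrac _ x) (format "x %:F") : ring_scope.

Section Defs.
Variable R : realType.
Local Notation C := R[i].
Local Notation RF := {fraction {poly C}}.
Local Notation normc := (@ComplexField.Normc.normc R).

Definition rnum (w : RF) : {poly C} :=
  let r := repr w in (\n_r) %/ gcdp (\n_r) (\d_r).
Definition rden (w : RF) : {poly C} :=
  let r := repr w in (\d_r) %/ gcdp (\n_r) (\d_r).

(** Value of a rational function at z (reduced form; 0 at poles). *)
Definition reval (w : RF) (z : C) : C := (rnum w).[z] / (rden w).[z].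

Definition rdeg (w : RF) : nat := (maxn (size (rnum w)) (size (rden w))).-1.

Definition Zf : RF := ('X)%:F.

(** Asymptotic relations as z -> oo within X (X : set of finite points). *)
Definition bigO (X : C -> Prop) (f g : C -> C) : Prop :=
  exists M : R, 0 < M /\ exists r : R, forall z, X z -> r < normc z ->
    normc (f z) <= M * normc (g z).
Definition littleo (X : C -> Prop) (f g : C -> C) : Prop :=
  forall M : R, 0 < M -> exists r : R, forall z, X z -> r < normc z ->
    normc (f z) <= M * normc (g z).
Definition asym (X : C -> Prop) (f g : C -> C) : Prop :=
  littleo X (fun z => f z - g z) g /\ littleo X (fun z => g z - f z) f.

Definition asymp_seq (X : C -> Prop) (phi : nat -> C -> C) : Prop :=
  forall n, littleo X (phi n.+1) (phi n).

Definition unbounded (X : C -> Prop) : Prop :=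
  forall r : R, exists z, X z /\ r < normc z.

(** Approximants of the continued fraction
    num 1 / (den 1 - num 2 / (den 2 - ... - num m / den m)).
    cf_tail num den k m = num k / (den k - num (k+1) / (... num (k+m-1)/den(k+m-1))). *)
Fixpoint cf_tail (num den : nat -> RF) (k m : nat) : RF :=
  match m with
  | 0 => 0
  | m'.+1 => num k / (den k - cf_tail num den k.+1 m')
  end.
Definition cf_approx (num den : nat -> RF) (m : nat) : RF := cf_tail num den 1 m.

Definition asym_cf (X : C -> Prop) (f : C -> C) (v : nat -> RF) : Prop :=
  asymp_seq X (fun m z => reval (v m.+1) z - reval (v m) z)
  /\ forall m, bigO X (fun z => f z - reval (v m) z)
                      (fun z => reval (v m.+1) z - reval (v m) z).

(** The S-type fraction a1/(z - a2/(1 - a3/(z - a4/(1 - ...))))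
    (a indexed from 1; a 0 unused). *)
Definition S_num (a : nat -> C) (k : nat) : RF := ((a k)%:P)%:F.
Definition S_den (k : nat) : RF := if odd k then Zf else 1.
Definition w (a : nat -> C) (n : nat) : RF := cf_approx (S_num a) S_den n.

(** The J-type fraction a1/(z - a2 - a2a3/(z - a3 - a4 - a4a5/(z - a5 - a6 - ...))). *)
Definition J_num (a : nat -> C) (k : nat) : RF :=
  if k == 1%N then ((a 1%N)%:P)%:F else ((a (k.*2 - 2)%N * a (k.*2 - 1)%N)%:P)%:F.
Definition J_den (a : nat -> C) (k : nat) : RF :=
  if k == 1%N then Zf - ((a 2%N)%:P)%:F
  else Zf - ((a (k.*2 - 1)%N + a k.*2)%:P)%:F.
Definition wJ (a : nat -> C) (n : nat) : RF := cf_approx (J_num a) (J_den a) n.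

Definition best_rat_approx (X : C -> Prop) (f : C -> C) (v : RF) : Prop :=
  forall u : RF, (rdeg u <= rdeg v)%N ->
    bigO X (fun z => f z - reval u z) (fun z => f z - reval v z) -> u = v.

Definition zpow_inv (k : nat) (z : C) : C := (z ^+ k)^-1.

Definition pade (X : C -> Prop) (f : C -> C) (n : nat) (v : RF) : Prop :=
  exists g h : {poly C}, (size g <= n)%N /\ h != 0 /\ (size h <= n.+1)%N /\
    v = g%:F / h%:F /\
    bigO X (fun z => f z - reval (g%:F / h%:F) z) (zpow_inv (n.*2.+1)).

End Defs.

(* Write the approximants as w_n = p_n / q_n, with (p_n, q_n) computed by the backward
   recurrence of the continued fraction.  The denominators q_n are monic of degree
   floor((n+1)/2), deg p_n < deg q_n, and p_(n+1) q_n - p_n q_(n+1) = a_1 ... a_(n+1); hence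
   w_n is in lowest terms, and w_(n+1) - w_n = a_1 ... a_(n+1) / (q_(n+1) q_n) differs from
   a_1 ... a_(n+1) z^-(n+1) by O(z^-(n+2)).  Part (1) and the equivalence of (a)-(e) follow
   by O/o calculus, the J-fraction being the even contraction of the S-fraction.  For (f),
   (g) and (3): two distinct rational functions of degree at most n differ by at least
   c |z|^-2n near infinity, so on an unbounded set at most one of them approximates f to
   order z^-(2n+1). *)

From HB Require Import structures.
From mathcomp Require Import all_boot all_order all_algebra.
From mathcomp Require Import reals complex.
From mathcomp Require Import ring lra zify.
From Stdlib Require Import FunctionalExtensionality.
Import Order.TTheory GRing.Theory Num.Theory ComplexField.Normc.
Local Open Scope ring_scope.
Set Implicit Arguments. Unset Strict Implicit. Unset Printing Implicit Defensive.

Section Continuants.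
Variables (T : comPzRingType) (num den : nat -> T).

Fixpoint cf_pq (k m : nat) : T * T :=
  if m is m'.+1 then
    (num k * (cf_pq k.+1 m').2, den k * (cf_pq k.+1 m').2 - (cf_pq k.+1 m').1)
  else (0, 1).

Local Notation p_ k m := (cf_pq k m).1.
Local Notation q_ k m := (cf_pq k m).2.

Lemma cf_pq_det k m :
  p_ k m.+1 * q_ k m - p_ k m * q_ k m.+1 = \prod_(k <= i < (k + m).+1) num i.
Proof.
elim: m k => [|m IH] k; first by rewrite /= addn0 big_nat1; ring.
by rewrite big_ltn ?ltnS ?leq_addr // -addSnnS -IH /=; ring.
Qed.

Lemma cf_pq_recr k m :
  p_ k m.+2 = den (k + m).+1 * p_ k m.+1 - num (k + m).+1 * p_ k m /\
  q_ k m.+2 = den (k + m).+1 * q_ k m.+1 - num (k + m).+1 * q_ k m.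
Proof.
elim: m k => [|m IH] k; first by rewrite /= addn0; split; ring.
have [IHp IHq] := IH k.+1; rewrite -addSnnS.
by move: IHp IHq => /= -> ->; split; ring.
Qed.

End Continuants.

Section ContinuedFractionApproximants.
Variable R : realType.
Local Notation C := R[i].
Local Notation RF := {fraction {poly C}}.
Variables (num den : nat -> {poly C}).
Local Notation p_ k m := (cf_pq num den k m).1.
Local Notation q_ k m := (cf_pq num den k m).2.

Lemma cf_tail_pq : (forall k m, q_ k m != 0) -> forall k m,
  cf_tail (fun i => (num i)%:F) (fun i => (den i)%:F) k m = (p_ k m)%:F / (q_ k m)%:F.
Proof.
move=> q_neq0 k m; elim: m k => [|m IH] k /=; first by rewrite tofrac0 mul0r.
have qF : (q_ k.+1 m)%:F != 0 :> RF by rewrite tofrac_eq0 q_neq0.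
rewrite IH.
have -> : (den k)%:F - (p_ k.+1 m)%:F / (q_ k.+1 m)%:F
          = (den k * q_ k.+1 m - p_ k.+1 m)%:F / (q_ k.+1 m)%:F.
  by rewrite rmorphB rmorphM /= mulrBl mulfK.
by rewrite invf_div mulrA rmorphM.
Qed.

End ContinuedFractionApproximants.

Lemma monicB_small (T : nzRingType) (p q : {poly T}) :
  (size p < size q)%N -> q \is monic -> (q - p \is monic) && (size (q - p) == size q).
Proof.
move=> spq mq; have spq' : (size (- p) < size q)%N by rewrite size_polyN.
by rewrite monicE lead_coefDl // (eqP mq) size_polyDl // !eqxx.
Qed.

Section SJFractions.
Variables (T : comNzRingType) (a : nat -> T).

Definition S_nump (k : nat) : {poly T} := (a k)%:P.
Definition S_denp (k : nat) : {poly T} := if odd k then 'X else 1.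
Definition J_nump (k : nat) : {poly T} :=
  if k == 1%N then (a 1%N)%:P else (a (k.*2 - 2)%N * a (k.*2 - 1)%N)%:P.
Definition J_denp (k : nat) : {poly T} :=
  if k == 1%N then 'X - (a 2%N)%:P else 'X - (a (k.*2 - 1)%N + a k.*2)%:P.

Local Notation pS k m := (cf_pq S_nump S_denp k m).1.
Local Notation qS k m := (cf_pq S_nump S_denp k m).2.
Local Notation pJ k m := (cf_pq J_nump J_denp k m).1.
Local Notation qJ k m := (cf_pq J_nump J_denp k m).2.

Lemma S_pq_shape m k :
  [/\ qS k m \is monic,
      size (qS k m) = (if odd k then m.+1 %/ 2 else m %/ 2)%N.+1,
      (size (pS k m) <= size (qS k m))%N &
      odd k -> (size (pS k m) < size (qS k m))%N].
Proof.
elim: m k => [|m IH] k.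
  by rewrite /= size_poly0 size_poly1 monic1; case: odd.
have [mq sq le lt] := IH k.+1; rewrite /= in sq lt.
have sp : (size (S_nump k * qS k.+1 m)%R <= size (qS k.+1 m))%N.
  by rewrite mul_polyC size_scale_leq.
rewrite /=; case ok: (odd k) in sq lt *; rewrite /= in sq lt.
- have -> : S_denp k = 'X by rewrite /S_denp ok.
  have mX : 'X * qS k.+1 m \is monic by rewrite monicMl ?monicX.
  have sX : size ('X * qS k.+1 m) = (size (qS k.+1 m)).+1.
    by rewrite mulrC size_mulX // monic_neq0.
  have lt' : (size (pS k.+1 m) < size ('X * qS k.+1 m)%R)%N by rewrite sX ltnS.
  have /andP [-> /eqP ->] := monicB_small lt' mX.
  rewrite sX sq; split=> //; first by lia.
  + by rewrite -sq; apply: leq_trans sp _.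
  + by rewrite -sq ltnS.
- have -> : S_denp k = 1 by rewrite /S_denp ok.
  rewrite mul1r; have /andP [-> /eqP ->] := monicB_small (lt isT) mq.
  by rewrite sq; split=> //; rewrite -sq.
Qed.

Lemma J_pq_shape m k :
  [/\ qJ k m \is monic, size (qJ k m) = m.+1 & (size (pJ k m) <= m)%N].
Proof.
elim: m k => [|m IH] k; first by rewrite /= size_poly0 size_poly1 monic1.
have [mq sq le] := IH k.+1.
have md : J_denp k \is monic by rewrite /J_denp; case: ifP => _; apply: monicXsubC.
have sd : size (J_denp k) = 2%N by rewrite /J_denp; case: ifP => _; apply: size_XsubC.
have sdq : size (J_denp k * qJ k.+1 m) = m.+2 by rewrite size_monicM ?sd ?sq // monic_neq0.
have lt : (size (pJ k.+1 m) < size (J_denp k * qJ k.+1 m)%R)%N by rewrite sdq; lia.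
have mdq : J_denp k * qJ k.+1 m \is monic by rewrite monicMl.
have /andP [mJ /eqP sJ] := monicB_small lt mdq.
have sn : (size (J_nump k) <= 1)%N by rewrite /J_nump; case: ifP => _; apply: size_polyC_leq1.
rewrite /= mJ sJ sdq; split=> //.
apply: leq_trans (size_polyMleq _ _) _; rewrite sq addnS /=.
by apply: leq_trans (leq_add sn (leqnn m)) _; rewrite add1n.
Qed.

Lemma S_pq_contraction j :
  pS 1 j.*2.+4 = J_denp j.+2 * pS 1 j.*2.+2 - J_nump j.+2 * pS 1 j.*2 /\
  qS 1 j.*2.+4 = J_denp j.+2 * qS 1 j.*2.+2 - J_nump j.+2 * qS 1 j.*2.
Proof.
have [p4 q4] := cf_pq_recr S_nump S_denp 1 j.*2.+2.
have [p3 q3] := cf_pq_recr S_nump S_denp 1 j.*2.+1.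
have [p2 q2] := cf_pq_recr S_nump S_denp 1 j.*2.
rewrite !add1n in p4 q4 p3 q3 p2 q2.
have -> : J_denp j.+2 = 'X - (S_nump j.*2.+3 + S_nump j.*2.+4).
  by rewrite /J_denp /S_nump -polyCD; congr ('X - (a _ + a _)%:P); lia.
have -> : J_nump j.+2 = S_nump j.*2.+2 * S_nump j.*2.+3.
  by rewrite /J_nump /S_nump -polyCM; congr ((a _ * a _)%:P); lia.
move: p4 q4 p3 q3 p2 q2; rewrite /S_denp /= !odd_double /= => -> -> -> -> -> ->.
by split; ring.
Qed.

Lemma S_pq_double j : cf_pq S_nump S_denp 1 j.*2 = cf_pq J_nump J_denp 1 j.
Proof.
suff [] : cf_pq S_nump S_denp 1 j.*2 = cf_pq J_nump J_denp 1 j /\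
          cf_pq S_nump S_denp 1 j.*2.+2 = cf_pq J_nump J_denp 1 j.+1 by [].
elim: j => [|j [IH1 IH2]].
  by split=> //; rewrite /= /S_nump /S_denp /J_nump /J_denp /=; congr (_, _); ring.
split=> //; have [pe qe] := S_pq_contraction j.
have [pJe qJe] := cf_pq_recr J_nump J_denp 1 j; rewrite add1n in pJe qJe.
rewrite doubleS; apply: injective_projections.
- by rewrite pe pJe -IH1 -IH2.
- by rewrite qe qJe -IH1 -IH2.
Qed.

End SJFractions.

Section SJApproximants.
Variables (R : realType) (a : nat -> R[i]).
Local Notation pS n := (cf_pq (S_nump a) (S_denp R[i]) 1 n).1.
Local Notation qS n := (cf_pq (S_nump a) (S_denp R[i]) 1 n).2.
Local Notation pJ n := (cf_pq (J_nump a) (J_denp a) 1 n).1.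
Local Notation qJ n := (cf_pq (J_nump a) (J_denp a) 1 n).2.

Lemma w_pq n : w a n = (pS n)%:F / (qS n)%:F.
Proof.
rewrite /w /cf_approx.
have -> : S_den R = fun k => (S_denp R[i] k)%:F.
  apply: functional_extensionality => k.
  by rewrite /S_den /S_denp /Zf; case: odd; rewrite ?tofrac1.
by apply: cf_tail_pq => k m; have [/monic_neq0] := S_pq_shape a m k.
Qed.

Lemma wJ_pq n : wJ a n = (pJ n)%:F / (qJ n)%:F.
Proof.
rewrite /wJ /cf_approx.
have -> : J_num a = fun k => (J_nump a k)%:F.
  by apply: functional_extensionality => k; rewrite /J_num /J_nump; case: ifP.
have -> : J_den a = fun k => (J_denp a k)%:F.
  apply: functional_extensionality => k.
  by rewrite /J_den /J_denp /Zf; case: ifP; rewrite rmorphB.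
by apply: cf_tail_pq => k m; have [/monic_neq0] := J_pq_shape a m k.
Qed.

Lemma w_double n : w a n.*2 = wJ a n.
Proof. by rewrite w_pq wJ_pq S_pq_double. Qed.

End SJApproximants.

Section RationalFunctions.
Variable R : realType.
Local Notation C := R[i].
Local Notation RF := {fraction {poly C}}.
Implicit Types (u : RF) (p q : {poly C}).

Lemma repr_fracE u : u = (\n_(repr u))%:F / (\d_(repr u))%:F.
Proof.
have dF : (\d_(repr u))%:F != 0 :> RF by rewrite tofrac_eq0 denom_ratioP.
apply: (mulIf dF); rewrite mulfVK // -{1}[u]reprK.
unlock FracField.tofrac; rewrite !piE; apply/eqmodP.
rewrite /= FracField.equivfE /FracField.mulf !numden_Ratio; first by rewrite !mulr1 mulrC.
all: by rewrite ?mulf_neq0 ?oner_neq0 ?denom_ratioP.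
Qed.

Lemma tofrac_div_gcdp p q : q != 0 ->
  p%:F / q%:F = (p %/ gcdp p q)%:F / (q %/ gcdp p q)%:F :> RF.
Proof.
move=> q0; set g := gcdp p q.
have gF : g%:F != 0 :> RF by rewrite tofrac_eq0 gcdp_eq0 negb_and q0 orbT.
have pE : p = p %/ g * g by rewrite divpK // dvdp_gcdl.
have qE : q = q %/ g * g by rewrite divpK // dvdp_gcdr.
by rewrite [in LHS]pE [in LHS]qE !rmorphM /= -mulf_div divff // mulr1.
Qed.

Lemma rden_neq0 u : rden u != 0.
Proof.
rewrite /rden /=; set n := \n_ _; set d := \d_ _.
have d0 : d != 0 := denom_ratioP _.
by apply: contra d0 => /eqP dg0; rewrite -(divpK (dvdp_gcdr n d)) dg0 mul0r.
Qed.

Lemma rnum_rdenE u : u = (rnum u)%:F / (rden u)%:F.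
Proof. by rewrite {1}[u]repr_fracE (tofrac_div_gcdp _ (denom_ratioP _)). Qed.

Lemma coprimep_rnum_rden u : coprimep (rnum u) (rden u).
Proof. by apply: coprimep_div_gcd; rewrite denom_ratioP orbT. Qed.

Lemma rnum_rden_cross u p q : q != 0 -> u = p%:F / q%:F -> rnum u * q = p * rden u.
Proof.
move=> q0 uE; apply/eqP; rewrite -tofrac_eq !tofracM -eqr_div ?tofrac_eq0 ?rden_neq0 //.
by rewrite -rnum_rdenE -uE.
Qed.

Lemma dvdp_rnum u p q : q != 0 -> u = p%:F / q%:F -> rnum u %| p.
Proof.
move=> q0 uE; rewrite -(Gauss_dvdpl _ (coprimep_rnum_rden u)).
by rewrite -(rnum_rden_cross q0 uE) dvdp_mulr.
Qed.

Lemma dvdp_rden u p q : q != 0 -> u = p%:F / q%:F -> rden u %| q.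
Proof.
move=> q0 uE; have cp : coprimep (rden u) (rnum u) by rewrite coprimep_sym coprimep_rnum_rden.
by rewrite -(Gauss_dvdpr _ cp) (rnum_rden_cross q0 uE) dvdp_mull.
Qed.

Lemma rnum_eqp u p q : q != 0 -> coprimep p q -> u = p%:F / q%:F -> rnum u %= p.
Proof.
move=> q0 cpq uE; rewrite /eqp (dvdp_rnum q0 uE) -(Gauss_dvdpl _ cpq).
by rewrite (rnum_rden_cross q0 uE) dvdp_mulr.
Qed.

Lemma rden_eqp u p q : q != 0 -> coprimep p q -> u = p%:F / q%:F -> rden u %= q.
Proof.
move=> q0 cpq uE; rewrite coprimep_sym in cpq.
rewrite /eqp (dvdp_rden q0 uE) -(Gauss_dvdpr _ cpq).
by rewrite -(rnum_rden_cross q0 uE) dvdp_mull.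
Qed.

Lemma rdeg_coprime u p q : q != 0 -> coprimep p q -> u = p%:F / q%:F ->
  rdeg u = (maxn (size p) (size q)).-1.
Proof.
move=> q0 cpq uE.
by rewrite /rdeg (eqp_size (rnum_eqp q0 cpq uE)) (eqp_size (rden_eqp q0 cpq uE)).
Qed.

Lemma rdeg_leq u p q n : q != 0 -> u = p%:F / q%:F ->
  (size p <= n.+1)%N -> (size q <= n.+1)%N -> (rdeg u <= n)%N.
Proof.
move=> q0 uE sp sq.
have sd : (size (rden u) <= size q)%N by rewrite dvdp_leq // (dvdp_rden q0 uE).
have sn : (size (rnum u) <= size p)%N.
  have [p0 | p0] := eqVneq p 0; last by rewrite dvdp_leq // (dvdp_rnum q0 uE).
  move: (rnum_rden_cross q0 uE); rewrite p0 mul0r => /eqP.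
  by rewrite mulf_eq0 (negbTE q0) orbF => /eqP ->.
by rewrite /rdeg; lia.
Qed.

Lemma reval_frac u p q z : q != 0 -> u = p%:F / q%:F -> q.[z] != 0 ->
  reval u z = p.[z] / q.[z].
Proof.
move=> q0 uE qz; have /dvdpP [r qE] := dvdp_rden q0 uE.
have dz : (rden u).[z] != 0 by apply: contraNneq qz => dz0; rewrite qE hornerM dz0 mulr0.
have := congr1 (horner^~ z) (rnum_rden_cross q0 uE); rewrite /= !hornerM => e.
by apply: (mulIf qz); rewrite /reval mulfVK // mulrAC e mulfK.
Qed.

Lemma reval0 z : reval (0 : RF) z = 0.
Proof.
have e : (0 : RF) = (0 : {poly C})%:F / (1%:P)%:F by rewrite tofrac0 mul0r.
have q0 : (1%:P : {poly C}) != 0 by rewrite polyC_eq0 oner_neq0.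
rewrite (reval_frac q0 e); first by rewrite horner0 mul0r.
by rewrite hornerC oner_neq0.
Qed.

End RationalFunctions.


Section PolynomialGrowth.
Variable R : realType.
Local Notation C := R[i].
Implicit Types (x y z : C) (p D : {poly C}).

Lemma normc_ge0 x : 0 <= normc x.
Proof. by case: x => ? ?; apply: sqrtr_ge0. Qed.

Lemma normc_gt0 x : (0 < normc x) = (x != 0).
Proof.
rewrite lt_def normc_ge0 andbT; apply/idP/idP; apply: contra.
  by move=> /eqP ->; rewrite normc0.
by move=> /eqP/eq0_normc ->.
Qed.

Lemma normcX x n : normc (x ^+ n) = normc x ^+ n.
Proof. by elim: n => [|n IH]; rewrite ?normc1 // !exprS normcM IH. Qed.

Lemma normcB_le x y : normc (x - y) <= normc x + normc y.
Proof. by rewrite -(normcN y); apply: le_normcD. Qed.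

Lemma normc_sum n (F : 'I_n -> C) : normc (\sum_(i < n) F i) <= \sum_(i < n) normc (F i).
Proof.
elim/big_rec2: _ => [|i y s _ IH]; first by rewrite normc0.
by apply: le_trans (le_normcD _ _) _; rewrite lerD2l.
Qed.

Definition near_oo (P : C -> Prop) := exists r : R, forall z, r < normc z -> P z.

Lemma near_ooW (P : C -> Prop) : (forall z, P z) -> near_oo P.
Proof. by move=> PT; exists 0. Qed.

Lemma near_oo_gt (r : R) : near_oo (fun z => r < normc z).
Proof. by exists r. Qed.

Lemma near_oo_and (P Q : C -> Prop) : near_oo P -> near_oo Q -> near_oo (fun z => P z /\ Q z).
Proof.
move=> [r1 P1] [r2 Q2]; exists (Num.max r1 r2) => z.
by rewrite gt_max => /andP [z1 z2]; split; [apply: P1 | apply: Q2].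
Qed.

Lemma near_ooS (P Q : C -> Prop) : (forall z, P z -> Q z) -> near_oo P -> near_oo Q.
Proof. by move=> PQ [r Pr]; exists r => z /Pr /PQ. Qed.

Lemma normc_horner_le p : exists2 K : R, 0 < K &
  forall (j : nat) z, (size p <= j.+1)%N -> 1 <= normc z -> normc p.[z] <= K * normc z ^+ j.
Proof.
set S := \sum_(i < size p) normc p`_i.
have S0 : 0 <= S by apply: sumr_ge0 => i _; apply: normc_ge0.
exists (1 + S) => [|j z sp z1]; first by lra.
rewrite horner_coef; apply: le_trans (normc_sum _) _.
have zj : 0 <= normc z ^+ j by rewrite exprn_ge0 ?normc_ge0.
apply: le_trans (_ : S * normc z ^+ j <= _); last by nra.
rewrite /S mulr_suml; apply: ler_sum => i _; rewrite normcM normcX.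
apply: ler_wpM2l; first exact: normc_ge0.
by apply: ler_weXn2l => //; have := ltn_ord i; lia.
Qed.

Lemma normc_monic_sub_lead D : D \is monic -> exists2 K : R, 0 < K &
  forall z, 1 <= normc z ->
    normc (D.[z] - z ^+ (size D).-1) * normc z <= K * normc z ^+ (size D).-1.
Proof.
move=> mD; set k := (size D).-1; set E := D - 'X^k.
have sD : size D = k.+1 by rewrite prednK // size_poly_gt0 monic_neq0.
have sE : (size (E * 'X)%R <= k.+1)%N.
  apply: leq_trans (size_polyMleq _ _) _; rewrite size_polyX addn2 /= ltnS.
  apply/leq_sizeP => j kj; rewrite coefB coefXn.
  have [->|jk] := eqVneq j k; first by rewrite -lead_coefE (eqP mD) subrr.
  by rewrite subr0 nth_default // sD; lia.
have [K K0 EK] := normc_horner_le (E * 'X); exists K => // z z1.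
by have := EK k z sE z1; rewrite hornerMX normcM /E hornerD hornerN hornerXn.
Qed.

Lemma normc_monic_horner_ge D : D \is monic ->
  near_oo (fun z => normc z ^+ (size D).-1 / 2 <= normc D.[z]).
Proof.
move=> mD; have [K K0 DK] := normc_monic_sub_lead mD; set k := (size D).-1 in DK *.
exists (1 + 2 * K) => z zK; have z1 : 1 <= normc z by lra.
have := DK z z1; have := normcB_le D.[z] (D.[z] - z ^+ k); rewrite opprB addrC subrK normcX.
have := normc_ge0 (D.[z] - z ^+ k); have : 0 <= normc z ^+ k by rewrite exprn_ge0 ?normc_ge0.
move: (normc z ^+ k) (normc (D.[z] - z ^+ k)) => T e T0 e0 h1 h2; nra.
Qed.

Lemma normc_horner_ge p : p != 0 -> exists2 c : R, 0 < c &
  near_oo (fun z => c * normc z ^+ (size p).-1 <= normc p.[z]).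
Proof.
move=> p0; set l := lead_coef p; have l0 : l != 0 by rewrite lead_coef_eq0.
have mq : l^-1 *: p \is monic by rewrite monicE lead_coefZ mulVf.
have nl0 : 0 < normc l by rewrite normc_gt0.
exists (normc l / 2); first by rewrite divr_gt0.
apply: near_ooS (normc_monic_horner_ge mq) => z.
rewrite size_scale ?invr_eq0 // hornerZ normcM normcV => h.
by rewrite -(ler_pM2l nl0) mulVKf ?gt_eqF in h; lra.
Qed.

Lemma near_oo_horner_neq0 p : p != 0 -> near_oo (fun z => p.[z] != 0).
Proof.
move=> p0; have [c c0 pc] := normc_horner_ge p0.
apply: near_ooS (near_oo_and pc (near_oo_gt 1)) => z [pz z1].
apply: contraTneq pz => ->; rewrite normc0 -ltNge.
by rewrite mulr_gt0 // exprn_gt0 //; lra.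
Qed.
End PolynomialGrowth.

Section Landau.
Variable R : realType.
Local Notation C := R[i].
Implicit Types (X Y : C -> Prop) (f g h : C -> C).

Lemma sub_bigO X Y f g : (forall z, X z -> Y z) -> bigO Y f g -> bigO X f g.
Proof. by move=> XY [M [M0 [r fg]]]; exists M; split=> //; exists r => z /XY; apply: fg. Qed.

Lemma sub_littleo X Y f g : (forall z, X z -> Y z) -> littleo Y f g -> littleo X f g.
Proof. by move=> XY fg M M0; have [r {}fg] := fg M M0; exists r => z /XY; apply: fg. Qed.

Lemma eq_near_bigOl X f f' g :
  near_oo (fun z => f z = f' z) -> bigO X f g -> bigO X f' g.
Proof.
move=> [r1 ff'] [M [M0 [r2 fg]]]; exists M; split=> //; exists (Num.max r1 r2) => z Xz.
by rewrite gt_max => /andP [z1 z2]; rewrite -ff' //; apply: fg.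
Qed.

Lemma eq_near_bigOr X f g g' :
  near_oo (fun z => g z = g' z) -> bigO X f g -> bigO X f g'.
Proof.
move=> [r1 gg'] [M [M0 [r2 fg]]]; exists M; split=> //; exists (Num.max r1 r2) => z Xz.
by rewrite gt_max => /andP [z1 z2]; rewrite -gg' //; apply: fg.
Qed.

Lemma bigO0 X g : bigO X (fun=> 0) g.
Proof. by exists 1; split=> //; exists 0 => z _ _; rewrite normc0 mul1r normc_ge0. Qed.

Lemma bigO_refl X f : bigO X f f.
Proof. by exists 1; split=> //; exists 0 => z _ _; rewrite mul1r. Qed.

Lemma bigO_trans X f g h : bigO X f g -> bigO X g h -> bigO X f h.
Proof.
move=> [M1 [M10 [r1 fg]]] [M2 [M20 [r2 gh]]]; exists (M1 * M2); split; first exact: mulr_gt0.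
exists (Num.max r1 r2) => z Xz; rewrite gt_max => /andP [z1 z2].
by apply: le_trans (fg z Xz z1) _; rewrite -mulrA ler_pM2l // gh.
Qed.

Lemma littleo_bigO X f g : littleo X f g -> bigO X f g.
Proof. by move=> fg; have [r {}fg] := fg 1 ltr01; exists 1; split=> //; exists r. Qed.

Lemma bigO_littleo_trans X f g h : bigO X f g -> littleo X g h -> littleo X f h.
Proof.
move=> [M1 [M10 [r1 fg]]] gh M M0; have [r2 {}gh] := gh (M / M1) (divr_gt0 M0 M10).
exists (Num.max r1 r2) => z Xz; rewrite gt_max => /andP [z1 z2].
have := fg z Xz z1; have := gh z Xz z2; have := normc_ge0 (h z).
have : M1 * (M / M1) = M by rewrite mulrC mulfVK // lt0r_neq0.
move: (M / M1) => t; nra.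
Qed.

Lemma littleo_bigO_trans X f g h : littleo X f g -> bigO X g h -> littleo X f h.
Proof.
move=> fg [M1 [M10 [r1 gh]]] M M0; have [r2 {}fg] := fg (M / M1) (divr_gt0 M0 M10).
exists (Num.max r1 r2) => z Xz; rewrite gt_max => /andP [z1 z2].
have := fg z Xz z2; have := gh z Xz z1; have := normc_ge0 (h z).
have : M / M1 * M1 = M by rewrite mulfVK // lt0r_neq0.
have : 0 < M / M1 by rewrite divr_gt0.
move: (M / M1) => t; nra.
Qed.

Lemma bigOD X f g h : bigO X f h -> bigO X g h -> bigO X (fun z => f z + g z) h.
Proof.
move=> [M1 [M10 [r1 fh]]] [M2 [M20 [r2 gh]]]; exists (M1 + M2); split; first exact: addr_gt0.
exists (Num.max r1 r2) => z Xz; rewrite gt_max => /andP [z1 z2].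
by apply: le_trans (le_normcD _ _) _; rewrite mulrDl lerD ?fh ?gh.
Qed.

Lemma bigOB X f g h : bigO X f h -> bigO X g h -> bigO X (fun z => f z - g z) h.
Proof.
move=> fh [M [M0 [r gh]]]; apply: bigOD fh _.
by exists M; split=> //; exists r => z; rewrite normcN; apply: gh.
Qed.

Lemma bigO_scale X (c : C) g : bigO X (fun z => c * g z) g.
Proof.
exists (normc c + 1); split; first by have := normc_ge0 c; lra.
exists 0 => z _ _; rewrite normcM ler_wpM2r ?normc_ge0 //; lra.
Qed.

Lemma bigO_scale_inv X (c : C) g : c != 0 -> bigO X g (fun z => c * g z).
Proof.
move=> c0; have c1 : 0 < normc c by rewrite normc_gt0.
exists (normc c)^-1; split; first by rewrite invr_gt0.
by exists 0 => z _ _; rewrite normcM mulKf ?gt_eqF.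
Qed.

Lemma bigO_addr_littleo X g1 g2 : littleo X g2 g1 -> bigO X g1 (fun z => g1 z + g2 z).
Proof.
move=> g21; have [r {}g21] := g21 (1 / 2) (divr_gt0 ltr01 (ltr0Sn _ 1)).
exists 2; split=> //; exists r => z Xz zr; have := g21 z Xz zr.
have := normcB_le (g1 z + g2 z) (g2 z); rewrite addrK; lra.
Qed.

Lemma asym_of_littleo X f g : littleo X (fun z => f z - g z) g -> asym X f g.
Proof.
move=> fg; split=> // M M0; set m := Num.min 1 M.
have m0 : 0 < m by rewrite lt_min ltr01.
have m1 : m <= 1 by rewrite ge_min lexx.
have mM : m <= M by rewrite ge_min lexx orbT.
have [r {}fg] := fg (m / 2) (divr_gt0 m0 (ltr0Sn _ 1)).
have e0 : 0 < m / 2 by rewrite divr_gt0.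
have e1 : 2 * (m / 2) <= 1 by rewrite mulrC mulfVK ?pnatr_eq0.
have eM : 2 * (m / 2) <= M by rewrite mulrC mulfVK ?pnatr_eq0.
exists r => z Xz zr; have fgz := fg z Xz zr.
have gf : normc (g z) <= normc (f z) + normc (f z - g z).
  by have := normcB_le (f z) (f z - g z); rewrite opprB addrC subrK.
have f0 := normc_ge0 (f z); have g0 := normc_ge0 (g z).
rewrite -opprB normcN; move: (m / 2) e0 e1 eM fgz => e e0 e1 eM fgz.
have : normc (g z) <= 2 * normc (f z) by nra.
nra.
Qed.

Lemma asym_sym X f g : asym X f g -> asym X g f.
Proof. by case. Qed.

Lemma asym_bigO X f g : asym X f g -> bigO X f g.
Proof.
move=> [fg _]; have := bigOD (littleo_bigO fg) (bigO_refl X g).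
by apply: eq_near_bigOl; apply: near_ooW => z; rewrite subrK.
Qed.

End Landau.

Section InversePowers.
Variable R : realType.
Local Notation C := R[i].
Local Notation all := (fun _ : C => True).

Lemma normc_zpow_inv k (z : C) : normc (zpow_inv k z) = (normc z ^+ k)^-1.
Proof. by rewrite /zpow_inv normcV normcX. Qed.

Lemma bigO_zpow_inv k j : (k <= j)%N -> bigO all (@zpow_inv R j) (@zpow_inv R k).
Proof.
move=> kj; exists 1; split=> //; exists 1 => z _ z1.
have z0 : 0 < normc z by lra.
rewrite !normc_zpow_inv mul1r lef_pV2 ?posrE ?exprn_gt0 //.
by rewrite ler_eXn2l // ltW.
Qed.

Lemma littleo_zpow_invS k : littleo all (@zpow_inv R k.+1) (@zpow_inv R k).
Proof.
move=> M M0; exists (1 + M^-1) => z _ zM.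
have Mi : 0 < M^-1 by rewrite invr_gt0.
have z0 : 0 < normc z by lra.
rewrite !normc_zpow_inv exprS invfM ler_pM2r ?invr_gt0 ?exprn_gt0 //.
by rewrite -[M]invrK lef_pV2 ?posrE ?invr_gt0 //; lra.
Qed.

Lemma littleo_zpow_inv k j : (k < j)%N -> littleo all (@zpow_inv R j) (@zpow_inv R k).
Proof. by move=> kj; apply: bigO_littleo_trans (bigO_zpow_inv kj) (littleo_zpow_invS k). Qed.

Lemma not_bigO_zpow_invS (X : C -> Prop) k :
  unbounded X -> ~ bigO X (@zpow_inv R k) (@zpow_inv R k.+1).
Proof.
move=> Xoo [M [M0 [r kk]]]; have [z [Xz]] := Xoo (Num.max r (Num.max M 1)).
rewrite !gt_max => /and3P [zr zM z1].
have z0 : 0 < normc z by lra.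
have := kk z Xz zr; rewrite !normc_zpow_inv exprS invfM mulrA -[X in X <= _]mul1r.
by rewrite ler_pM2r ?invr_gt0 ?exprn_gt0 // ler_pdivlMr // mul1r leNgt zM.
Qed.

End InversePowers.

Section RationalAsymptotics.
Variable R : realType.
Local Notation C := R[i].
Local Notation RF := {fraction {poly C}}.
Local Notation all := (fun _ : C => True).

Lemma div_monic_sub_div_zpow (c : C) (D : {poly C}) k : D \is monic -> size D = k.+1 ->
  bigO all (fun z => c / D.[z] - c / z ^+ k) (@zpow_inv R k.+1).
Proof.
move=> mD sD; have [K K0 DK] := normc_monic_sub_lead mD; rewrite sD /= in DK.
have [r Dz] := near_oo_and (normc_monic_horner_ge mD) (near_oo_gt 1); rewrite sD /= in Dz.
exists (2 * K * normc c + 1); split; first by have := normc_ge0 c; nra.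
exists r => z _ /Dz [Dge z1]; have {}DK := DK z (ltW z1).
have n0 : 0 < normc z by lra.
have T0 : 0 < normc z ^+ k by rewrite exprn_gt0.
have D0 : 0 < normc D.[z] by apply: lt_le_trans Dge; rewrite divr_gt0.
have zk0 : z ^+ k != 0 by rewrite -normc_gt0 normcX.
have Dz0 : D.[z] != 0 by rewrite -normc_gt0.
have -> : c / D.[z] - c / z ^+ k = - (c * (D.[z] - z ^+ k)) / (D.[z] * z ^+ k).
  by field; rewrite Dz0 zk0.
rewrite mulNr normcN !normcM normcV normcM normcX normc_zpow_inv exprS.
rewrite ler_pdivrMr ?mulr_gt0 // mulrAC ler_pdivlMr ?mulr_gt0 // !mulrA ler_pM2r //.
have cK : 0 <= normc c * K by rewrite mulr_ge0 ?normc_ge0 ?ltW.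
have := ler_wpM2l cK Dge; have := ler_wpM2l (normc_ge0 c) DK.
move: (normc (D.[z] - z ^+ k)) (normc z ^+ k) => e T; nra.
Qed.

Lemma zpow_inv_bigO_reval_sub (u v : RF) n : (rdeg u <= n)%N -> (rdeg v <= n)%N -> u != v ->
  bigO all (@zpow_inv R n.*2) (fun z => reval u z - reval v z).
Proof.
rewrite /rdeg => su sv uv.
set N := rnum u * rden v - rnum v * rden u; set Q := rden u * rden v.
have N0 : N != 0.
  apply: contra uv; rewrite subr_eq0 => /eqP NE.
  rewrite [u]rnum_rdenE [v]rnum_rdenE eqr_div ?tofrac_eq0 ?rden_neq0 //.
  by rewrite -!tofracM NE.
have Q0 : Q != 0 by rewrite mulf_neq0 ?rden_neq0.
have sQ : (size Q <= n.*2.+1)%N by apply: leq_trans (size_polyMleq _ _) _; lia.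
have [c c0 Nc] := normc_horner_ge N0; have [K K0 QK] := normc_horner_le Q.
exists (K / c); split; first by rewrite divr_gt0.
have [r zr] := near_oo_and Nc (near_oo_and (near_oo_horner_neq0 Q0) (near_oo_gt 1)).
exists r => z _ /zr [Nz [Qz z1]].
have uvE : reval u z - reval v z = N.[z] / Q.[z].
  move: Qz; rewrite /reval /Q /N !hornerE mulf_eq0 negb_or => /andP [uz vz].
  by field; rewrite uz vz.
have z0 : 0 < normc z := lt_trans ltr01 z1.
have T0 : 0 < normc z ^+ n.*2 := exprn_gt0 _ z0.
have cN : c <= normc N.[z].
  by apply: le_trans Nz; rewrite ler_peMr ?(ltW c0) //; apply/exprn_ege1/ltW.
have Q0' : 0 < normc Q.[z] by rewrite normc_gt0.
rewrite normc_zpow_inv uvE normcM normcV mulrA ler_pdivlMr // mulrC.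
apply: le_trans (_ : K <= _); first by rewrite ler_pdivrMr // QK // ltW.
by rewrite -[X in X <= _](mulfVK (lt0r_neq0 c0) K) ler_pM2l ?divr_gt0.
Qed.

Lemma eq_reval_of_bigO (X : C -> Prop) (u v : RF) n : unbounded X ->
  (rdeg u <= n)%N -> (rdeg v <= n)%N ->
  bigO X (fun z => reval u z - reval v z) (@zpow_inv R n.*2.+1) -> u = v.
Proof.
move=> Xoo su sv uvO; apply/eqP/negP => /negP uv; apply: (not_bigO_zpow_invS (k := n.*2) Xoo).
exact: bigO_trans (sub_bigO _ (zpow_inv_bigO_reval_sub su sv uv)) uvO.
Qed.
End RationalAsymptotics.
Section AsymptoticExpansions.
Variable R : realType.
Local Notation C := R[i].
Local Notation RF := {fraction {poly C}}.
Local Notation all := (fun _ : C => True).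

Lemma asym_lead_zpow (X : C -> Prop) f (c : C) k : c != 0 ->
  bigO X (fun z => f z - c / z ^+ k) (@zpow_inv R k.+1) -> asym X f (fun z => c / z ^+ k).
Proof.
move=> c0 fO; apply: asym_of_littleo; apply: bigO_littleo_trans fO _.
apply: littleo_bigO_trans (bigO_scale_inv X (@zpow_inv R k) c0).
exact: sub_littleo (@littleo_zpow_invS R k).
Qed.

Definition approx_diff (v : nat -> RF) (m : nat) (z : C) : C := reval (v m.+1) z - reval (v m) z.

Lemma asymp_seq_zpow (X : C -> Prop) (phi : nat -> C -> C) (k : nat -> nat) :
  (forall m, (k m < k m.+1)%N) ->
  (forall m, bigO all (phi m) (@zpow_inv R (k m))) ->
  (forall m, bigO all (@zpow_inv R (k m)) (phi m)) -> asymp_seq X phi.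
Proof.
move=> kS phiO Ophi m; apply: sub_littleo (_ : littleo all _ _) => //.
apply: bigO_littleo_trans (phiO m.+1) (littleo_bigO_trans _ (Ophi m)).
exact: littleo_zpow_inv.
Qed.

Lemma asym_cf_zpow_iff (X : C -> Prop) f (v : nat -> RF) (k : nat -> nat) :
  (forall m, (k m < k m.+1)%N) ->
  (forall m, bigO all (approx_diff v m) (@zpow_inv R (k m))) ->
  (forall m, bigO all (@zpow_inv R (k m)) (approx_diff v m)) ->
  asym_cf X f v <-> forall m, bigO X (fun z => f z - reval (v m) z) (@zpow_inv R (k m)).
Proof.
move=> kS vO Ov; split=> [[_ fv] m | fv].
  exact: bigO_trans (fv m) (sub_bigO _ (vO m)).
split; first exact: asymp_seq_zpow kS vO Ov.
by move=> m; apply: bigO_trans (fv m) (sub_bigO _ (Ov m)).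
Qed.

End AsymptoticExpansions.

Section SFractionAsymptotics.
Variables (R : realType) (a : nat -> R[i]).
Hypothesis a_neq0 : forall n, (1 <= n)%N -> a n != 0.
Local Notation C := R[i].
Local Notation RF := {fraction {poly C}}.
Local Notation all := (fun _ : C => True).
Local Notation pS n := (cf_pq (S_nump a) (S_denp C) 1 n).1.
Local Notation qS n := (cf_pq (S_nump a) (S_denp C) 1 n).2.

Definition prod_a (m : nat) : C := \prod_(1 <= i < m.+1) a i.

Lemma prod_a_neq0 m : prod_a m != 0.
Proof.
rewrite prodf_seq_neq0; apply/allP => i; rewrite mem_index_iota => /andP [i1 _].
by apply/implyP => _; apply: a_neq0.
Qed.

Lemma qS_monic n : qS n \is monic.
Proof. by have [] := S_pq_shape a n 1. Qed.

Lemma size_qS n : size (qS n) = (n.+1 %/ 2).+1.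
Proof. by have [] := S_pq_shape a n 1. Qed.

Lemma size_pS n : (size (pS n) < size (qS n))%N.
Proof. by have [_ _ _] := S_pq_shape a n 1; apply. Qed.

Lemma pqS_det m : pS m.+1 * qS m - pS m * qS m.+1 = (prod_a m.+1)%:P.
Proof. by rewrite cf_pq_det add1n rmorph_prod. Qed.

Lemma coprimep_pqS m : coprimep (pS m) (qS m).
Proof.
case: m => [|m]; first by rewrite coprime0p eqpxx.
apply/Bezout_eq1_coprimepP; exists ((prod_a m.+1)^-1%:P * qS m, - ((prod_a m.+1)^-1%:P * pS m)).
transitivity ((prod_a m.+1)^-1%:P * (pS m.+1 * qS m - pS m * qS m.+1)); first by rewrite /=; ring.
by rewrite pqS_det -polyCM mulVf ?prod_a_neq0.
Qed.

Lemma rdeg_w n : rdeg (w a n) = (n.+1 %/ 2)%N.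
Proof.
rewrite (rdeg_coprime (monic_neq0 (qS_monic n)) (coprimep_pqS n) (w_pq a n)).
by rewrite (maxn_idPr (ltnW (size_pS n))) size_qS.
Qed.

Lemma approx_diff_w_near m :
  near_oo (fun z => approx_diff (w a) m z = prod_a m.+1 / (qS m.+1 * qS m).[z]).
Proof.
have qq0 : qS m.+1 * qS m != 0 by rewrite mulf_neq0 ?monic_neq0 ?qS_monic.
apply: near_ooS (near_oo_horner_neq0 qq0) => z; rewrite (hornerM (qS m.+1)) mulf_eq0 negb_or.
move=> /andP [q1z q0z]; rewrite /approx_diff.
rewrite (reval_frac (monic_neq0 (qS_monic m.+1)) (w_pq a m.+1) q1z).
rewrite (reval_frac (monic_neq0 (qS_monic m)) (w_pq a m) q0z).
have e : (pS m.+1 * qS m - pS m * qS m.+1).[z] = prod_a m.+1 by rewrite pqS_det hornerC.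
rewrite hornerD hornerN (hornerM (pS m.+1)) (hornerM (pS m)) in e.
by rewrite -e; field; rewrite q1z q0z.
Qed.

Lemma approx_diff_w_expansion m :
  bigO all (fun z => approx_diff (w a) m z - prod_a m.+1 / z ^+ m.+1) (@zpow_inv R m.+2).
Proof.
have mq : qS m.+1 * qS m \is monic by rewrite monicMl ?qS_monic.
have sq : size (qS m.+1 * qS m) = m.+2.
  rewrite size_monicM ?qS_monic ?monic_neq0 ?qS_monic // (size_qS m.+1) (size_qS m).
  lia.
apply: eq_near_bigOl (div_monic_sub_div_zpow (prod_a m.+1) mq sq).
by apply: near_ooS (approx_diff_w_near m) => z ->.
Qed.

Lemma asym_approx_diff_w m :
  asym all (approx_diff (w a) m) (fun z => prod_a m.+1 / z ^+ m.+1).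
Proof. exact: asym_lead_zpow (prod_a_neq0 m.+1) (approx_diff_w_expansion m). Qed.

Lemma approx_diff_w_bigO m : bigO all (approx_diff (w a) m) (@zpow_inv R m.+1).
Proof. exact: bigO_trans (asym_bigO (asym_approx_diff_w m)) (bigO_scale _ _ _). Qed.

Lemma zpow_inv_bigO_approx_diff_w m : bigO all (@zpow_inv R m.+1) (approx_diff (w a) m).
Proof.
apply: bigO_trans (bigO_scale_inv _ _ (prod_a_neq0 m.+1)) _.
exact: asym_bigO (asym_sym (asym_approx_diff_w m)).
Qed.

Lemma w_sub_bigO m n : (m <= n)%N ->
  bigO all (fun z => reval (w a n) z - reval (w a m) z) (@zpow_inv R m.+1).
Proof.
move=> /subnK <-; elim: (n - m)%N => [|d IH].
  by apply: eq_near_bigOl (bigO0 _ _); apply: near_ooW => z; rewrite subrr.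
have dO : bigO all (approx_diff (w a) (d + m)) (@zpow_inv R m.+1).
  apply: bigO_trans (approx_diff_w_bigO _) _.
  by apply: bigO_zpow_inv; rewrite ltnS leq_addl.
apply: eq_near_bigOl (bigOD IH dO).
by apply: near_ooW => z; rewrite /approx_diff addSn addrC addrA subrK.
Qed.

Lemma asym_w_lead n : (1 <= n)%N -> asym all (reval (w a n)) (fun z => a 1%N / z).
Proof.
move=> n1; apply: (@asym_lead_zpow R all _ (a 1%N) 1 (a_neq0 (leqnn 1))).
apply: eq_near_bigOl (bigOD (w_sub_bigO n1) (approx_diff_w_expansion 0)).
have w0 : w a 0 = 0 by [].
by apply: near_ooW => z; rewrite /approx_diff /prod_a big_nat1 w0 reval0 subr0 addrA subrK.
Qed.

Definition approx_order (X : C -> Prop) (f : C -> C) (n : nat) :=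
  bigO X (fun z => f z - reval (w a n) z) (@zpow_inv R n.+1).

Lemma approx_order_le X f m n : (n <= m)%N -> approx_order X f m -> approx_order X f n.
Proof.
move=> nm fm; have mn : bigO X (@zpow_inv R m.+1) (@zpow_inv R n.+1).
  exact: sub_bigO _ (@bigO_zpow_inv R n.+1 m.+1 nm).
apply: eq_near_bigOl (bigOD (bigO_trans fm mn) (sub_bigO (fun _ _ => I) (w_sub_bigO nm))).
by apply: near_ooW => z; rewrite addrA subrK.
Qed.

Lemma approx_order_inf X f :
  (forall N, exists n, (N <= n)%N /\ approx_order X f n) -> forall n, approx_order X f n.
Proof. by move=> finf n; have [m [nm fm]] := finf n; apply: approx_order_le nm fm. Qed.

Lemma asymp_seq_w X : asymp_seq X (approx_diff (w a)).
Proof.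
exact: (@asymp_seq_zpow R X _ S (fun m => ltnSn m.+1))
         approx_diff_w_bigO zpow_inv_bigO_approx_diff_w.
Qed.

Lemma asym_cf_w_iff X f : asym_cf X f (w a) <-> forall n, approx_order X f n.
Proof.
exact: asym_cf_zpow_iff (fun m => ltnSn m.+1) approx_diff_w_bigO zpow_inv_bigO_approx_diff_w.
Qed.

Lemma approx_diff_wJ m :
  approx_diff (wJ a) m = fun z => approx_diff (w a) m.*2 z + approx_diff (w a) m.*2.+1 z.
Proof.
apply: functional_extensionality => z.
by rewrite /approx_diff -!w_double doubleS [RHS]addrC addrA subrK.
Qed.

Lemma asym_cf_wJ_iff X f : asym_cf X f (wJ a) <-> forall n, approx_order X f n.
Proof.
have JO m : bigO all (approx_diff (wJ a) m) (@zpow_inv R m.*2.+1).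
  by rewrite /approx_diff -!w_double; apply: w_sub_bigO; rewrite leq_double.
have OJ m : bigO all (@zpow_inv R m.*2.+1) (approx_diff (wJ a) m).
  rewrite approx_diff_wJ; apply: bigO_trans (zpow_inv_bigO_approx_diff_w m.*2) _.
  exact: bigO_addr_littleo (asymp_seq_w _ m.*2).
have kS m : (m.*2.+1 < m.+1.*2.+1)%N by rewrite ltnS doubleS.
rewrite (asym_cf_zpow_iff _ _ kS JO OJ).
split=> [fJ | fo m]; last by rewrite -w_double; apply: fo.
apply: approx_order_inf => N; exists N.*2; split; first by rewrite -addnn leq_addr.
by have := fJ N; rewrite -w_double.
Qed.

Lemma asym_lead_term_iff X f :
  (forall n, asym X (fun z => f z - reval (w a n) z) (fun z => prod_a n.+1 / z ^+ n.+1))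
  <-> forall n, approx_order X f n.
Proof.
split=> [fa n | fo n]; first exact: bigO_trans (asym_bigO (fa n)) (bigO_scale _ _ _).
apply: asym_lead_zpow (prod_a_neq0 n.+1) _.
apply: eq_near_bigOl (bigOD (fo n.+1) (sub_bigO (fun _ _ => I) (approx_diff_w_expansion n))).
by apply: near_ooW => z; rewrite /approx_diff; ring.
Qed.

Lemma approx_order_uniq X f n v : unbounded X -> (forall n, approx_order X f n) ->
  (rdeg v <= n)%N -> bigO X (fun z => f z - reval v z) (@zpow_inv R n.*2.+1) -> v = w a n.*2.
Proof.
move=> Xoo fo vn fv; apply: (eq_reval_of_bigO Xoo vn); first by rewrite rdeg_w -addnn; lia.
apply: eq_near_bigOl (bigOB (fo n.*2) fv).
by apply: near_ooW => z; rewrite opprB addrC addrA subrK.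
Qed.

Lemma unique_fit_iff X f : unbounded X ->
  (forall n,
     (rdeg (w a n.*2) <= n)%N
     /\ bigO X (fun z => f z - reval (w a n.*2) z) (@zpow_inv R n.*2.+1)
     /\ (forall v : RF, (rdeg v <= n)%N ->
           bigO X (fun z => f z - reval v z) (@zpow_inv R n.*2.+1) -> v = w a n.*2))
  <-> forall n, approx_order X f n.
Proof.
move=> Xoo; split=> [fit | fo n].
  apply: approx_order_inf => N; exists N.*2; split; first by rewrite -addnn leq_addr.
  by have [_ []] := fit N.
split; first by rewrite rdeg_w -addnn; lia.
by split; [apply: fo | move=> v; apply: approx_order_uniq].
Qed.

Lemma pade_iff X f : unbounded X ->
  (forall n, (1 <= n)%N ->
     pade X f n (w a n.*2) /\ (forall v : RF, pade X f n v -> v = w a n.*2))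
  <-> forall n, approx_order X f n.
Proof.
move=> Xoo; split=> [fp | fo n n1].
  apply: approx_order_inf => N; exists N.+1.*2; split; first by rewrite -addnn; lia.
  by have [[g [h [_ [_ [_ [wE fO]]]]]] _] := fp N.+1 isT; rewrite /approx_order wE.
split.
  have sp : (size (pS n.*2) <= n)%N by have := size_pS n.*2; rewrite size_qS -addnn; lia.
  have sq : (size (qS n.*2) <= n.+1)%N by rewrite size_qS -addnn; lia.
  exists (pS n.*2), (qS n.*2); split; first exact: sp.
  split; first exact: monic_neq0 (qS_monic _).
  split; first exact: sq.
  by split; [apply: w_pq | rewrite -w_pq; apply: fo].
move=> v [g [h [sg [h0 [sh [vE fv]]]]]]; rewrite -vE in fv.
by apply: approx_order_uniq Xoo fo (rdeg_leq h0 vE (leqW sg) sh) fv.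
Qed.

Lemma best_rat_approx_iff X f v : unbounded X -> (forall n, approx_order X f n) ->
  best_rat_approx X f v <-> exists n, v = w a n.*2.
Proof.
move=> Xoo fo; split=> [best | [n ->] u un fu]; last first.
  rewrite rdeg_w -addnn in un; have {}un : (rdeg u <= n)%N by lia.
  exact: approx_order_uniq Xoo fo un (bigO_trans fu (fo n.*2)).
set d := rdeg v; exists d; have [//|wv] := eqVneq (w a d.*2) v.
have wd : (rdeg (w a d.*2) <= d)%N by rewrite rdeg_w -addnn; lia.
symmetry; apply: best => //.
have fw : littleo X (fun z => f z - reval (w a d.*2) z) (fun z => reval (w a d.*2) z - reval v z).
  apply: littleo_bigO_trans (sub_bigO (fun _ _ => I) (zpow_inv_bigO_reval_sub wd (leqnn d) wv)).
  exact: bigO_littleo_trans (fo d.*2) (sub_littleo (fun _ _ => I) (@littleo_zpow_invS R d.*2)).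
apply: bigO_trans (littleo_bigO fw) (eq_near_bigOr _ (bigO_addr_littleo fw)).
by apply: near_ooW => z; rewrite addrC addrA subrK.
Qed.
End SFractionAsymptotics.

Unset Implicit Arguments.

Theorem theorem4p2 (R : realType) (a : nat -> R[i])
    (ha : forall n : nat, (1 <= n)%N -> a n != 0) :
  (* (1) *)
  ((forall n : nat, rdeg (w a n) = (n.+1 %/ 2)%N)
   /\ (forall n : nat, (1 <= n)%N ->
         asym (fun _ => True) (reval (w a n)) (fun z => a 1%N / z))
   /\ (forall n : nat, (1 <= n)%N ->
         asym (fun _ => True)
           (fun z => reval (w a n) z - reval (w a n.-1) z)
           (fun z => (\prod_(1 <= i < n.+1) a i) / z ^+ n))
   /\ asymp_seq (fun _ => True)
        (fun m z => reval (w a m.+1) z - reval (w a m) z)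
   /\ (forall n : nat, w a n.*2 = wJ a n))
  (* (2) *)
  /\ (forall (f : R[i] -> R[i]) (X : R[i] -> Prop), unbounded X ->
      [<-> (* (a) *) asym_cf X f (w a);
           (* (b) *) asym_cf X f (wJ a);
           (* (c) *) (forall n : nat, asym X (fun z => f z - reval (w a n) z)
                         (fun z => (\prod_(1 <= i < n.+2) a i) / z ^+ n.+1));
           (* (d) *) (forall n : nat, bigO X (fun z => f z - reval (w a n) z)
                         (zpow_inv n.+1));
           (* (e) *) (forall N : nat, exists n : nat, (N <= n)%N /\
                         bigO X (fun z => f z - reval (w a n) z) (zpow_inv n.+1));
           (* (f) *) (forall n : nat,
                        (rdeg (w a n.*2) <= n)%N
                        /\ bigO X (fun z => f z - reval (w a n.*2) z) (zpow_inv n.*2.+1)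
                        /\ (forall v : {fraction {poly R[i]}}, (rdeg v <= n)%N ->
                              bigO X (fun z => f z - reval v z) (zpow_inv n.*2.+1) ->
                              v = w a n.*2));
           (* (g) *) (forall n : nat, (1 <= n)%N ->
                        pade X f n (w a n.*2)
                        /\ (forall v : {fraction {poly R[i]}}, pade X f n v -> v = w a n.*2))])
  (* (3) *)
  /\ (forall (f : R[i] -> R[i]) (X : R[i] -> Prop), unbounded X ->
      asym_cf X f (w a) ->
      forall v : {fraction {poly R[i]}},
        best_rat_approx X f v <-> exists n : nat, v = w a n.*2).
Proof.
split.
  split; first exact: rdeg_w.
  split; first exact: asym_w_lead.
  split; first by case=> // m _; apply: asym_approx_diff_w.
  by split; [apply: asymp_seq_w | apply: w_double].
split=> f X Xoo.
  tfae.
  - by move/(asym_cf_w_iff ha)/(asym_cf_wJ_iff ha).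
  - by move/(asym_cf_wJ_iff ha)/(asym_lead_term_iff ha).
  - by move/(asym_lead_term_iff ha).
  - by move=> fo N; exists N.
  - by move/(approx_order_inf ha)/(unique_fit_iff ha f Xoo).
  - by move/(unique_fit_iff ha f Xoo)/(pade_iff ha f Xoo).
  - by move/(pade_iff ha f Xoo)/(asym_cf_w_iff ha).
by move/(asym_cf_w_iff ha) => fo v; apply: best_rat_approx_iff.
Qed.
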